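(* Let $n$ be a positive integer, let $\mathcal F$ be an $\mathcal N$-saturated family of subsets of $[n]$, and let $\mathcal G$ be a component of $\mathcal F$. Let $B_1,\dots,B_l$ be the minimal elements and $A_1,\dots,A_k$ the maximal elements of $\mathcal G$. Let $M\in\mathcal F$ be such that $\bigcup_{i=1}^l B_i\subseteq M\subseteq\bigcap_{i=1}^k A_i$, and such that $M$ is minimal (with respect to inclusion) among the sets of $\mathcal F$ with this property. Then every $X\in\mathcal G$ is comparable to $M$.
   Context: The poset $\mathcal N$ has four elements $a,b,c,d$ with $a<c$, $b<c$, $b<d$ and no other comparabilities. A family $\mathcal Q$ of sets (ordered by inclusion) contains an induced copy of $\mathcal N$ if there are distinct sets in $\mathcal Q$ whose inclusion relations are exactly those of $a,b,c,d$ above. A family $\mathcal F$ of subsets of $[n]=\{1,\dots,n\}$ is $\mathcal N$-saturated if $\mathcal F$ contains no induced copy of $\mathcal N$, but for every $S\subseteq[n]$ with $S\notin\mathcal F$, the family $\mathcal F\cup\{S\}$ contains an induced copy of $\mathcal N$. A component of $\mathcal F$ is the vertex set of a connected component of the Hasse diagram (as a graph) of the poset $(\mathcal F\setminus\{\emptyset,[n]\},\subseteq)$; its minimal and maximal elements are taken with respect to inclusion within the component. *)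

From mathcomp Require Import all_boot.
Set Implicit Arguments. Unset Strict Implicit. Unset Printing Implicit Defensive.

Section NSat.
Variable T : finType.
Implicit Types (Q F : {set {set T}}) (a b c d X Y : {set T}).

Definition incomparable a b := ~~ (a \subset b) && ~~ (b \subset a).

Definition has_induced_N Q : Prop :=
  exists a b c d,
    [/\ [&& a \in Q, b \in Q, c \in Q & d \in Q],
        uniq [:: a; b; c; d],
        [&& a \proper c, b \proper c & b \proper d] &
        [&& incomparable a b, incomparable a d & incomparable c d]].

(* N-saturated (ground set = all of T) *)
Definition N_saturated F : Prop :=
  ~ has_induced_N F /\
  forall S : {set T}, S \notin F -> has_induced_N (S |: F).

Definition Fcore F := F :\: [set set0; setT].

Definition covers F X Y :=
  [&& X \in Fcore F, Y \in Fcore F, X \proper Y &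
      [forall Z in Fcore F, ~~ ((X \proper Z) && (Z \proper Y))]].
Definition hasse_adj F : rel {set T} :=
  fun X Y => covers F X Y || covers F Y X.

Definition is_component F (G : {set {set T}}) : Prop :=
  exists2 X0, X0 \in Fcore F & G = [set Y | connect (hasse_adj F) X0 Y].

Definition minimal_in (G : {set {set T}}) X := (X \in G) && [forall C in G, ~~ (C \proper X)].
Definition maximal_in (G : {set {set T}}) X := (X \in G) && [forall C in G, ~~ (X \proper C)].

Definition bigcup_min (G : {set {set T}}) := \bigcup_(B | minimal_in G B) B.
Definition bigcap_max (G : {set {set T}}) := \bigcap_(A | maximal_in G A) A.

End NSat.

From mathcomp Require Import all_boot.
From mathcomp Require Import zify.
Set Implicit Arguments. Unset Strict Implicit. Unset Printing Implicit Defensive.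

(* Suppose some X in the component G is incomparable to M, and let S be the
   union of the members of G lying below M and below every member of G that
   is incomparable to M.  N-freeness puts every minimal element of G into this
   union and makes every member of G comparable to S.  A set comparable to a
   whole component and squeezed between two of its members can be added to F
   without creating an N, so saturation gives S in F.  Now S lies between the
   minimal and the maximal elements of G and S is contained in M, so the
   minimality of M forces S = M; but S is contained in X, contradicting the
   incomparability of X and M. *)

Section Comparability.
Variable T : finType.
Implicit Types (A B : {set T}) (G : {set {set T}}).

Definition comparable A B := (A \subset B) || (B \subset A).

Lemma comparableC A B : comparable A B = comparable B A.
Proof. by rewrite /comparable orbC. Qed.

Lemma sub_comparable A B : A \subset B -> comparable A B.
Proof. by rewrite /comparable => ->. Qed.

Lemma proper_comparable A B : A \proper B -> comparable A B.
Proof. by move/proper_sub/sub_comparable. Qed.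

Lemma incomparableE A B : incomparable A B = ~~ comparable A B.
Proof. by rewrite /incomparable /comparable negb_or. Qed.

Lemma incomparableC A B : incomparable A B = incomparable B A.
Proof. by rewrite !incomparableE comparableC. Qed.

Lemma incomparable_neq A B : incomparable A B -> A != B.
Proof. by apply: contraTneq => ->; rewrite incomparableE /comparable subxx. Qed.

Lemma comparable_trivial A B : A \in [set set0; setT] -> comparable A B.
Proof. by case/set2P=> ->; rewrite /comparable ?sub0set ?subsetT ?orbT. Qed.

Lemma exists_minimal_in G A : A \in G -> exists2 B, minimal_in G B & B \subset A.
Proof.
move=> GA; have [B /minsetP[GB minB] BA] := @minset_exists _ [pred B | B \in G] A GA.
exists B => //; rewrite /minimal_in [B \in G]GB; apply/forall_inP => C GC.
by apply/negP=> /andP[CB]; rewrite (minB C GC CB) subxx.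
Qed.

End Comparability.

Section InducedN.
Variable T : finType.
Variable F : {set {set T}}.
Implicit Types (a b c d : {set T}).

Lemma has_induced_NI a b c d : a \in F -> b \in F -> c \in F -> d \in F ->
  a \proper c -> b \proper c -> b \proper d ->
  incomparable a b -> incomparable a d -> incomparable c d -> has_induced_N F.
Proof.
move=> Fa Fb Fc Fd ac bc bd iab iad icd; exists a, b, c, d; split.
- by rewrite Fa Fb Fc Fd.
- rewrite /= !inE !negb_or (incomparable_neq iab) (proper_neq ac).
  rewrite (incomparable_neq iad) (proper_neq bc) (proper_neq bd).
  by rewrite (incomparable_neq icd).
- by rewrite ac bc bd.
- by rewrite iab iad icd.
Qed.

Lemma N_free_comparable a b c d : ~ has_induced_N F ->
  a \in F -> b \in F -> c \in F -> d \in F ->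
  a \subset c -> b \subset c -> b \subset d -> incomparable c d -> ~~ (a \subset d) ->
  comparable a b.
Proof.
move=> NF Fa Fb Fc Fd ac bc bd icd nad; have [ncd ndc] := andP icd.
apply/negPn/negP; rewrite -incomparableE => iab; have [_ nba] := andP iab.
apply: NF; apply: (has_induced_NI Fa Fb Fc Fd) => //.
- by rewrite properE ac; apply: contra nba; apply: subset_trans.
- by rewrite properE bc; apply: contra ncd => cb; apply: subset_trans cb bd.
- by rewrite properE bd; apply: contra ndc => db; apply: subset_trans db bc.
- by rewrite /incomparable nad; apply: contra ndc => da; apply: subset_trans da ac.
Qed.

End InducedN.

Section Components.
Variable T : finType.
Variable F : {set {set T}}.
Implicit Types (Y W : {set T}).

Lemma mem_Fcore Y : (Y \in Fcore F) = (Y \notin [set set0; setT]) && (Y \in F).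
Proof. by rewrite inE. Qed.

Lemma connect_hasse_proper Y W : Y \in Fcore F -> W \in Fcore F -> Y \proper W ->
  connect (hasse_adj F) Y W.
Proof.
move: {2}(#|W| - #|Y|) (leqnn (#|W| - #|Y|)) => k.
elim: k Y W => [|k IHk] Y W hk FY FW YW; have YW_card := proper_card YW; first lia.
have [noZ|] := boolP [forall Z in Fcore F, ~~ ((Y \proper Z) && (Z \proper W))].
  by apply: connect1; rewrite /hasse_adj /covers FY FW YW noZ.
case/forall_inPn=> Z FZ /negbNE/andP[YZ ZW].
have YZ_card := proper_card YZ; have ZW_card := proper_card ZW.
by apply: (connect_trans (y := Z)); apply: IHk => //; lia.
Qed.

Variable G : {set {set T}}.
Hypothesis compG : is_component F G.

Lemma component_Fcore Y : Y \in G -> Y \in Fcore F.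
Proof.
have [X0 FX0 ->] := compG; rewrite inE => X0Y.
have closedFcore : closed (hasse_adj F) (Fcore F).
  by move=> U V /orP[] /and4P[FU FV _ _]; rewrite FU FV.
by rewrite -(closed_connect closedFcore X0Y).
Qed.

Lemma component_F Y : Y \in G -> Y \in F.
Proof. by move/component_Fcore; rewrite mem_Fcore => /andP[]. Qed.

Lemma component_comparable Y W : Y \in Fcore F -> W \in Fcore F -> comparable Y W ->
  (Y \in G) = (W \in G).
Proof.
have [X0 _ ->] := compG; have hasse_sym : connect_sym (hasse_adj F).
  by apply: sym_connect_sym => U V; rewrite /hasse_adj orbC.
suff connYW U V : U \in Fcore F -> V \in Fcore F -> U \subset V ->
    connect (hasse_adj F) U V.
  move=> FY FW /orP[YW|WY]; rewrite !inE.
    by rewrite (same_connect_r hasse_sym (connYW _ _ FY FW YW)).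
  by rewrite (same_connect_r hasse_sym (connYW _ _ FW FY WY)).
move=> FU FV UV; case: (eqVneq U V) => [-> //|neqUV].
by apply: connect_hasse_proper; rewrite // properEneq neqUV.
Qed.

Section AddComparable.
Variables S P Q : {set T}.
Hypothesis comparableS : {in G, forall W, comparable W S}.
Hypotheses (GP : P \in G) (PS : P \subset S) (GQ : Q \in G) (SQ : S \subset Q).

Lemma comparable_mem_component W : W \in Fcore F -> comparable W S -> W \in G.
Proof.
move=> FW /orP[WS|SW].
  by rewrite (component_comparable FW (component_Fcore GQ)) ?sub_comparable
    ?(subset_trans WS SQ).
by rewrite -(component_comparable (component_Fcore GP) FW) ?sub_comparable
  ?(subset_trans PS SW).
Qed.

(* Otherwise W, and through W also Y, would lie in the component G. *)
Lemma comparable_across_trivial Y W : Y \in F -> incomparable S Y -> W \in F ->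
  comparable W S -> comparable W Y -> W \in [set set0; setT].
Proof.
move=> FY iSY FW cWS cWY; apply: contraT => nW.
have FcW : W \in Fcore F by rewrite mem_Fcore nW.
have FcY : Y \in Fcore F.
  rewrite mem_Fcore FY andbT; apply: contraL iSY => /comparable_trivial cYS.
  by rewrite incomparableE comparableC cYS.
have GY : Y \in G.
  by rewrite (component_comparable FcY FcW) ?comparable_mem_component // comparableC.
by move: iSY; rewrite incomparableE comparableC comparableS.
Qed.

(* An N in S |: F must use S; whichever position S takes, the N contains a set
   comparable to S and to a set incomparable to S, hence empty or full, although
   every member of an N is incomparable to another one. *)
Lemma N_free_setU1 : ~ has_induced_N F -> ~ has_induced_N (S |: F).
Proof.
move=> NF [a [b [c [d [/and4P[Fa Fb Fc Fd] _ /and3P[ac bc bd] /and3P[iab iad icd]]]]]].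
have inF (x : {set T}) : x \in S |: F -> x != S -> x \in F.
  by case/setU1P=> [->|//]; rewrite eqxx.
have contra_trivial (x y : {set T}) : x \in [set set0; setT] -> incomparable x y -> False.
  by move/comparable_trivial=> cxy; rewrite incomparableE cxy.
have iba : incomparable b a by rewrite incomparableC.
have [aS|naS] := eqVneq a S.
  apply: (contra_trivial c d _ icd); apply: (comparable_across_trivial (Y := b)).
  - by apply: inF Fb _; rewrite -aS (incomparable_neq iba).
  - by rewrite -aS.
  - by apply: inF Fc _; rewrite -aS eq_sym (proper_neq ac).
  - by rewrite -aS comparableC proper_comparable.
  - by rewrite comparableC proper_comparable.
have [bS|nbS] := eqVneq b S.
  apply: (contra_trivial c d _ icd); apply: (comparable_across_trivial (Y := a)).
  - exact: inF Fa naS.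
  - by rewrite -bS.
  - by apply: inF Fc _; rewrite -bS eq_sym (proper_neq bc).
  - by rewrite -bS comparableC proper_comparable.
  - by rewrite comparableC proper_comparable.
have [cS|ncS] := eqVneq c S.
  apply: (contra_trivial b a _ iba); apply: (comparable_across_trivial (Y := d)).
  - by apply: inF Fd _; rewrite -cS eq_sym (incomparable_neq icd).
  - by rewrite -cS.
  - exact: inF Fb nbS.
  - by rewrite -cS proper_comparable.
  - exact: proper_comparable.
have [dS|ndS] := eqVneq d S.
  apply: (contra_trivial b a _ iba); apply: (comparable_across_trivial (Y := c)).
  - exact: inF Fc ncS.
  - by rewrite -dS incomparableC.
  - exact: inF Fb nbS.
  - by rewrite -dS proper_comparable.
  - exact: proper_comparable.
by apply: NF; apply: (has_induced_NI (inF _ Fa naS) (inF _ Fb nbS) (inF _ Fc ncS)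
  (inF _ Fd ndS)).
Qed.

End AddComparable.
End Components.

Section CommonLower.
Variable T : finType.
Variables (F G : {set {set T}}) (M : {set T}).
Hypotheses (NF : ~ has_induced_N F) (compG : is_component F G) (FM : M \in F).
Hypothesis minimal_sub_M : bigcup_min G \subset M.

Definition common_lower :=
  [set Y in G | (Y \subset M) && [forall Z in G, incomparable Z M ==> (Y \subset Z)]].

Definition common_lower_cup := \bigcup_(Y in common_lower) Y.

Lemma common_lowerP Y : reflect
  [/\ Y \in G, Y \subset M & {in G, forall Z, incomparable Z M -> Y \subset Z}]
  (Y \in common_lower).
Proof.
rewrite inE; apply: (iffP and3P) => [[GY YM /forall_inP YZ]|[GY YM YZ]].
  by split=> // Z GZ; apply/implyP/YZ.
by split=> //; apply/forall_inP => Z GZ; apply/implyP/YZ.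
Qed.

Lemma minimal_in_common_lower B : minimal_in G B -> B \in common_lower.
Proof.
move=> minB; have [GB /forall_inP noC] := andP minB.
have BM B' : minimal_in G B' -> B' \subset M.
  by move=> minB'; apply: subset_trans minimal_sub_M; apply: bigcup_sup minB'.
apply/common_lowerP; split=> // [|Z GZ iZM]; first exact: BM.
have [B' minB' B'Z] := exists_minimal_in GZ; have [GB' _] := andP minB'.
apply: contraT => nBZ.
have iMZ : incomparable M Z by rewrite incomparableC.
have /orP[BB'|B'B] := N_free_comparable NF (component_F compG GB)
  (component_F compG GB') FM (component_F compG GZ) (BM B minB) (BM B' minB') B'Z iMZ nBZ.
  by rewrite (subset_trans BB' B'Z) in nBZ.
have := noC B' GB'; rewrite properE B'B /= negbK => BB'.
by rewrite (subset_trans BB' B'Z) in nBZ.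
Qed.

Lemma common_lower_cup_sub_M : common_lower_cup \subset M.
Proof. by apply/bigcupsP => Y /common_lowerP[]. Qed.

Lemma common_lower_cup_sub_incomparable Z : Z \in G -> incomparable Z M ->
  common_lower_cup \subset Z.
Proof. by move=> GZ iZM; apply/bigcupsP => Y /common_lowerP[_ _ ->]. Qed.

Lemma bigcup_min_sub_common_lower_cup : bigcup_min G \subset common_lower_cup.
Proof.
by apply/bigcupsP => B minB; apply: bigcup_sup; apply: minimal_in_common_lower.
Qed.

Lemma common_lower_cup_sub_notin W : W \in G -> W \subset M -> W \notin common_lower ->
  common_lower_cup \subset W.
Proof.
rewrite inE => GW WM; rewrite GW WM /= => /forall_inPn[Z GZ].
rewrite negb_imply => /andP[iZM nWZ].
have iMZ : incomparable M Z by rewrite incomparableC.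
apply/bigcupsP => Y /common_lowerP[GY YM /(_ Z GZ iZM) YZ].
have /orP[WY|//] := N_free_comparable NF (component_F compG GW) (component_F compG GY)
  FM (component_F compG GZ) WM YM YZ iMZ nWZ.
by rewrite (subset_trans WY YZ) in nWZ.
Qed.

Lemma comparable_common_lower_cup W : W \in G -> comparable W common_lower_cup.
Proof.
move=> GW; have [/orP[WM|MW]|iWM] := boolP (comparable W M).
- have [WL|nWL] := boolP (W \in common_lower).
    by rewrite sub_comparable ?bigcup_sup.
  by rewrite comparableC sub_comparable ?common_lower_cup_sub_notin.
- by rewrite comparableC sub_comparable ?(subset_trans common_lower_cup_sub_M MW).
- by rewrite comparableC sub_comparable ?common_lower_cup_sub_incomparable
    ?incomparableE.
Qed.

End CommonLower.

Theorem lemma2p5 (n : nat) (F G : {set {set 'I_n}}) (M : {set 'I_n}) :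
  0 < n ->
  N_saturated F ->
  is_component F G ->
  M \in F ->
  bigcup_min G \subset M -> M \subset bigcap_max G ->
  (forall M', M' \in F -> bigcup_min G \subset M' -> M' \subset bigcap_max G ->
     ~~ (M' \proper M)) ->
  forall X, X \in G -> (X \subset M) || (M \subset X).
Proof.
move=> _ [NF saturated] compG FM minimal_sub_M M_sub_maximal minM X GX.
apply: contraT; rewrite -incomparableE => iXM.
pose S := common_lower_cup G M.
have SM : S \subset M := common_lower_cup_sub_M G M.
have SX : S \subset X := common_lower_cup_sub_incomparable GX iXM.
have minimal_sub_S := bigcup_min_sub_common_lower_cup NF compG FM minimal_sub_M.
have FS : S \in F.
  have [B minB _] := exists_minimal_in GX; have [GB _] := andP minB.
  apply/negPn/negP => /saturated; apply: (N_free_setU1 compG _ GB _ GX SX NF).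
  - exact: comparable_common_lower_cup NF compG FM.
  - exact: bigcup_sup (minimal_in_common_lower NF compG FM minimal_sub_M minB).
have := minM S FS minimal_sub_S (subset_trans SM M_sub_maximal).
rewrite properE SM negbK => MS.
by move: iXM; rewrite incomparableE /comparable (subset_trans MS SX) orbT.
Qed.
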